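(* Let $p,q$ be coprime integers and let $G(p,q)=\langle a,b\mid a^2ba^2b^2a^{-1}b^2,\ m^pl^q\rangle$, where $m=a^{-1}b^{-2}$ and $l=ab^{-1}a^2m^{-18}$. Let $k\in G(p,q)$ be an element with $m=k^q$ and $l=k^{-p}$. Suppose $G(p,q)$ acts on the right on a partially ordered set $(P,\le)$, $x\mapsto x g$, preserving the order. If some $x\in P$ satisfies either (1) $xk=x$ and $x$, $xa$ are comparable in $P$, or (2) $xa=x$ and $x$, $xk$ are comparable in $P$, then $xg=x$ for every $g\in G(p,q)$.
   Context: $G(p,q)$ is the fundamental group of $p/q$-Dehn surgery on the $(-2,3,7)$-pretzel knot, with $m$, $l$ the meridian and longitude. An element $k$ with $m=k^q$, $l=k^{-p}$ exists in $G(p,q)$. In the relations one has $k^{p-18q}=a^{-2}ba^{-1}$. *)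

From Stdlib Require Import ZArith.
Open Scope Z_scope.

Record IsGroup (G : Type) (mul : G -> G -> G) (inv : G -> G) (one : G) : Prop := {
  grp_assoc : forall x y z, mul x (mul y z) = mul (mul x y) z;
  grp_mul1g : forall x, mul one x = x;
  grp_mulg1 : forall x, mul x one = x;
  grp_mulVg : forall x, mul (inv x) x = one;
  grp_mulgV : forall x, mul x (inv x) = one
}.

Fixpoint npow {G : Type} (mul : G -> G -> G) (one : G) (x : G) (n : nat) : G :=
  match n with
  | O => one
  | S n' => mul x (npow mul one x n')
  end.

Definition zpow {G : Type} (mul : G -> G -> G) (inv : G -> G) (one : G)
  (x : G) (z : Z) : G :=
  if (0 <=? z) then npow mul one x (Z.to_nat z)
  else inv (npow mul one x (Z.to_nat (- z))).

Inductive generated {G : Type} (mul : G -> G -> G) (inv : G -> G) (one : G)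
  (a b : G) : G -> Prop :=
  | gen_one : generated mul inv one a b one
  | gen_a  : forall g, generated mul inv one a b g -> generated mul inv one a b (mul g a)
  | gen_ai : forall g, generated mul inv one a b g -> generated mul inv one a b (mul g (inv a))
  | gen_b  : forall g, generated mul inv one a b g -> generated mul inv one a b (mul g b)
  | gen_bi : forall g, generated mul inv one a b g -> generated mul inv one a b (mul g (inv b)).

Record IsPartialOrder (P : Type) (le : P -> P -> Prop) : Prop := {
  po_refl : forall x, le x x;
  po_antisym : forall x y, le x y -> le y x -> x = y;
  po_trans : forall x y z, le x y -> le y z -> le x z
}.

Record IsOrderRightAction (G : Type) (mul : G -> G -> G) (one : G)
  (P : Type) (le : P -> P -> Prop) (act : P -> G -> P) : Prop := {
  act_one : forall x, act x one = x;
  act_mul : forall x g h, act (act x g) h = act x (mul g h);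
  act_le : forall x y g, le x y -> le (act x g) (act y g)
}.

Definition comparable {P : Type} (le : P -> P -> Prop) (x y : P) : Prop :=
  le x y \/ le y x.

From Stdlib Require Import ZArith Znumtheory Lia List.
Import ListNotations.
Open Scope Z_scope.

(* Put r = p - 18q. The relations say b = a²k^r a and b² = k^(-q)a⁻¹, so G is generated by
   a and k, and both words
     W₁ = a² k^r a³ k^r a² k^q                 (b·b = k^(-q)a⁻¹ with b expanded),
     W₂ = a⁴ k^r a³ k^(-q) a⁻² k^(-q) a⁻¹       (the defining relator with b expanded)
   are trivial in G. Call g raising for x when x ≤ xg. Raising elements form a monoid
   containing the stabiliser of x, and when a product of raising elements fixes x, each
   factor fixes x (x ≤ xh ≤ xgh = x). In case (1) all letters of W₁ are raising for ≤ or
   for its reverse, so a fixes x. In case (2) k^n is raising for n ≥ 0 and for the reverse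
   order when n ≤ 0; according to the signs of r and q, all letters of W₁ or of W₂ are
   raising for one of the two orders, so k^r and k^q fix x, and then so does k since
   gcd(r, q) = gcd(p, q) = 1. *)

Definition mul_list {G : Type} (mul : G -> G -> G) (one : G) (gs : list G) : G :=
  fold_left mul gs one.

Lemma partial_order_flip {P : Type} {le : P -> P -> Prop} :
  IsPartialOrder P le -> IsPartialOrder P (fun u v => le v u).
Proof. intros [R A T]. constructor; eauto. Qed.

Lemma order_action_flip {G : Type} {mul : G -> G -> G} {one : G} {P : Type}
  {le : P -> P -> Prop} {act : P -> G -> P} :
  IsOrderRightAction G mul one P le act -> IsOrderRightAction G mul one P (fun u v => le v u) act.
Proof. intros [A M L]. constructor; auto. Qed.

Section Group.
Context {G : Type} {mul : G -> G -> G} {inv : G -> G} {one : G}.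
Hypothesis HG : IsGroup G mul inv one.

Local Infix "⋅" := mul (at level 40, left associativity).
Local Notation "x ⁻¹" := (inv x) (at level 2, format "x ⁻¹").
Local Notation "x ^ n" := (zpow mul inv one x n).

Let mul_assoc : forall x y z, x ⋅ (y ⋅ z) = x ⋅ y ⋅ z := grp_assoc _ _ _ _ HG.
Let mul_1_l : forall x, one ⋅ x = x := grp_mul1g _ _ _ _ HG.
Let mul_1_r : forall x, x ⋅ one = x := grp_mulg1 _ _ _ _ HG.
Let mul_inv_l : forall x, x⁻¹ ⋅ x = one := grp_mulVg _ _ _ _ HG.
Let mul_inv_r : forall x, x ⋅ x⁻¹ = one := grp_mulgV _ _ _ _ HG.

Lemma inv_unique x y : x ⋅ y = one -> y = x⁻¹.
Proof.
  intros H. rewrite <- (mul_1_l y), <- (mul_inv_l x), <- mul_assoc, H. apply mul_1_r.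
Qed.

Lemma inv_involutive x : x⁻¹⁻¹ = x.
Proof. symmetry. apply inv_unique, mul_inv_l. Qed.

Lemma inv_mul_distr x y : (x ⋅ y)⁻¹ = y⁻¹ ⋅ x⁻¹.
Proof.
  symmetry. apply inv_unique.
  rewrite mul_assoc, <- (mul_assoc x y), mul_inv_r, mul_1_r, mul_inv_r. reflexivity.
Qed.

Lemma mul_inv_cancel_r x y : x ⋅ y ⋅ y⁻¹ = x.
Proof. rewrite <- mul_assoc, mul_inv_r. apply mul_1_r. Qed.

Lemma inv_mul_cancel_r x y : x ⋅ y⁻¹ ⋅ y = x.
Proof. rewrite <- mul_assoc, mul_inv_l. apply mul_1_r. Qed.

Lemma npow_succ_r x n : npow mul one x (S n) = npow mul one x n ⋅ x.
Proof.
  induction n as [|n IH]; simpl in *.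
  - rewrite mul_1_r, mul_1_l. reflexivity.
  - rewrite <- mul_assoc, <- IH. reflexivity.
Qed.

Lemma zpow_succ_r x z : x ^ Z.succ z = x ^ z ⋅ x.
Proof.
  unfold zpow. destruct (Z.le_gt_cases 0 z) as [Hz|Hz].
  - rewrite (proj2 (Z.leb_le 0 z) Hz), (proj2 (Z.leb_le 0 (Z.succ z))) by lia.
    rewrite Z2Nat.inj_succ by exact Hz. apply npow_succ_r.
  - rewrite (proj2 (Z.leb_gt 0 z) Hz).
    replace (Z.to_nat (- z)) with (S (Z.to_nat (- Z.succ z))) by lia.
    cbn [npow]. rewrite inv_mul_distr, inv_mul_cancel_r.
    destruct (Z.leb_spec 0 (Z.succ z)) as [Hs|Hs].
    + replace (Z.succ z) with 0 by lia. apply inv_unique, mul_1_l.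
    + reflexivity.
Qed.

Lemma zpow_pred_r x z : x ^ Z.pred z = x ^ z ⋅ x⁻¹.
Proof.
  rewrite <- (Z.succ_pred z) at 2. rewrite zpow_succ_r. symmetry. apply mul_inv_cancel_r.
Qed.

Lemma zpow_add_r x m n : x ^ (m + n) = x ^ m ⋅ x ^ n.
Proof.
  induction n as [|n IH|n IH] using Z.peano_ind.
  - rewrite Z.add_0_r. symmetry. apply mul_1_r.
  - rewrite Z.add_succ_r, !zpow_succ_r, IH. symmetry. apply mul_assoc.
  - rewrite Z.add_pred_r, !zpow_pred_r, IH. symmetry. apply mul_assoc.
Qed.

Lemma zpow_opp_r x z : x ^ (- z) = (x ^ z)⁻¹.
Proof. apply inv_unique. rewrite <- zpow_add_r, Z.add_opp_diag_r. reflexivity. Qed.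

Lemma zpow_mul_r x z n : x ^ (z * n) = (x ^ z) ^ n.
Proof.
  induction n as [|n IH|n IH] using Z.peano_ind.
  - rewrite Z.mul_0_r. reflexivity.
  - rewrite Z.mul_succ_r, zpow_add_r, zpow_succ_r, IH. reflexivity.
  - rewrite Z.mul_pred_r, <- Z.add_opp_r, zpow_add_r, zpow_opp_r, zpow_pred_r, IH.
    reflexivity.
Qed.

Lemma zpow_1_r x : x ^ 1 = x.
Proof. apply mul_1_r. Qed.

Section Action.
Context {P : Type} {le : P -> P -> Prop} {act : P -> G -> P}.
Hypothesis Hact : IsOrderRightAction G mul one P le act.
Hypothesis HP : IsPartialOrder P le.

Let act_id : forall y, act y one = y := act_one _ _ _ _ _ _ Hact.
Let act_comp : forall y g h, act (act y g) h = act y (g ⋅ h) := act_mul _ _ _ _ _ _ Hact.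
Let act_mono : forall y z g, le y z -> le (act y g) (act z g) := act_le _ _ _ _ _ _ Hact.

Lemma act_inv_cancel_r y g : act (act y g) g⁻¹ = y.
Proof. rewrite act_comp, mul_inv_r. apply act_id. Qed.

Lemma act_inj_l y z g : act y g = act z g -> y = z.
Proof. intros H. rewrite <- (act_inv_cancel_r y g), H. apply act_inv_cancel_r. Qed.

Context {x : P}.

Lemma fixed_mul g h : act x g = x -> act x h = x -> act x (g ⋅ h) = x.
Proof. intros Hg Hh. rewrite <- act_comp, Hg. exact Hh. Qed.

Lemma fixed_inv g : act x g = x -> act x g⁻¹ = x.
Proof. intros Hg. rewrite <- Hg at 1. apply act_inv_cancel_r. Qed.

Lemma fixed_zpow g n : act x g = x -> act x (g ^ n) = x.
Proof.
  intros Hg. induction n as [|n IH|n IH] using Z.peano_ind.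
  - apply act_id.
  - rewrite zpow_succ_r. apply fixed_mul; assumption.
  - rewrite zpow_pred_r. apply fixed_mul; [|apply fixed_inv]; assumption.
Qed.

Lemma fixed_of_coprime_zpow g r s :
  Z.gcd r s = 1 -> act x (g ^ r) = x -> act x (g ^ s) = x -> act x g = x.
Proof.
  intros Hrs Hr Hs.
  destruct (Zis_gcd_bezout r s 1) as [u v Huv].
  { rewrite <- Hrs. apply Zgcd_is_gcd. }
  assert (Hg : g = (g ^ r) ^ u ⋅ (g ^ s) ^ v).
  { rewrite <- !zpow_mul_r, <- zpow_add_r, (Z.mul_comm r), (Z.mul_comm s), Huv.
    symmetry. apply zpow_1_r. }
  rewrite Hg. apply fixed_mul; apply fixed_zpow; assumption.
Qed.

Lemma fixed_generated a b g :
  act x a = x -> act x b = x -> generated mul inv one a b g -> act x g = x.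
Proof.
  intros Ha Hb Hg.
  induction Hg; try apply fixed_mul; try apply fixed_inv; auto.
Qed.

Lemma raised_of_fixed g : act x g = x -> le x (act x g).
Proof. intros ->. apply (po_refl _ _ HP). Qed.

Lemma raised_mul g h : le x (act x g) -> le x (act x h) -> le x (act x (g ⋅ h)).
Proof.
  intros Hg Hh. rewrite <- act_comp.
  apply (po_trans _ _ HP _ _ _ Hh), act_mono, Hg.
Qed.

Lemma fixed_of_raised_mul g h :
  le x (act x g) -> le x (act x h) -> act x (g ⋅ h) = x -> act x g = x /\ act x h = x.
Proof.
  intros Hg Hh Hgh.
  assert (Fh : act x h = x).
  { apply (po_antisym _ _ HP _ _); [|exact Hh].
    rewrite <- Hgh at 2. rewrite <- act_comp. apply act_mono, Hg. }
  split; [|exact Fh].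
  apply (act_inj_l _ _ h). rewrite act_comp, Hgh, Fh. reflexivity.
Qed.

Lemma raised_list gs :
  Forall (fun g => le x (act x g)) gs -> le x (act x (mul_list mul one gs)).
Proof.
  unfold mul_list. induction gs as [|g gs IH] using rev_ind; intros Hgs.
  - apply raised_of_fixed, act_id.
  - apply Forall_app in Hgs as [Hgs Hg]. apply Forall_inv in Hg.
    rewrite fold_left_app. apply raised_mul; auto.
Qed.

Lemma fixed_of_raised_list gs :
  act x (mul_list mul one gs) = x -> Forall (fun g => le x (act x g)) gs ->
  Forall (fun g => act x g = x) gs.
Proof.
  induction gs as [|g gs IH] using rev_ind; intros Hprod Hgs; [constructor|].
  pose proof (raised_list gs) as Hup.
  apply Forall_app in Hgs as [Hgs Hg]. apply Forall_inv in Hg.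
  unfold mul_list in *. rewrite fold_left_app in Hprod.
  destruct (fixed_of_raised_mul _ _ (Hup Hgs) Hg Hprod) as [Fgs Fg].
  apply Forall_app. split; [apply IH|constructor]; auto.
Qed.

Lemma raised_zpow g n : le x (act x g) -> 0 <= n -> le x (act x (g ^ n)).
Proof.
  intros Hg. revert n. apply natlike_ind.
  - apply raised_of_fixed, act_id.
  - intros n _ IH. rewrite zpow_succ_r. apply raised_mul; assumption.
Qed.

Lemma lowered_zpow g n : le x (act x g) -> n <= 0 -> le (act x (g ^ n)) x.
Proof.
  intros Hg Hn.
  pose proof (act_mono _ _ (g ^ n) (raised_zpow g (- n) Hg ltac:(lia))) as H.
  rewrite act_comp, <- zpow_add_r, Z.add_opp_diag_l, act_id in H. exact H.
Qed.

End Action.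

Section Relators.
Context {a b k : G} {p q : Z}.
Hypothesis Hrel : a ⋅ a ⋅ b ⋅ a ⋅ a ⋅ b ⋅ b ⋅ a⁻¹ ⋅ (b ⋅ b) = one.
Hypothesis Hkm : k ^ q = a⁻¹ ⋅ (b ⋅ b)⁻¹.
Hypothesis Hkl : k ^ (- p) = a ⋅ b⁻¹ ⋅ (a ⋅ a) ⋅ (a⁻¹ ⋅ (b ⋅ b)⁻¹) ^ (-18).

Lemma bb_eq : b ⋅ b = k ^ (- q) ⋅ a⁻¹.
Proof.
  rewrite zpow_opp_r, Hkm, inv_mul_distr, !inv_involutive. symmetry. apply mul_inv_cancel_r.
Qed.

Lemma b_eq : b = a ⋅ a ⋅ k ^ (p - 18 * q) ⋅ a.
Proof.
  assert (Hw : a ⋅ b⁻¹ ⋅ (a ⋅ a) = k ^ (- (p - 18 * q))).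
  { replace (- (p - 18 * q)) with (- p + - (q * -18)) by lia.
    rewrite zpow_add_r, (zpow_opp_r k (q * -18)), Hkl, <- Hkm, <- zpow_mul_r.
    symmetry. apply mul_inv_cancel_r. }
  rewrite <- (Z.opp_involutive (p - 18 * q)), zpow_opp_r, <- Hw, !inv_mul_distr, !inv_involutive.
  rewrite !mul_assoc, !mul_inv_cancel_r, inv_mul_cancel_r, mul_inv_r, mul_1_l. reflexivity.
Qed.

Let mul_b y : y ⋅ b = y ⋅ a ⋅ a ⋅ k ^ (p - 18 * q) ⋅ a.
Proof. rewrite b_eq, !mul_assoc. reflexivity. Qed.

Let mul_bb y : y ⋅ b ⋅ b = y ⋅ k ^ (- q) ⋅ a⁻¹.
Proof. rewrite <- mul_assoc, bb_eq, mul_assoc. reflexivity. Qed.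

Lemma relator_1 :
  mul_list mul one [a; a; k ^ (p - 18 * q); a; a; a; k ^ (p - 18 * q); a; a; k ^ q] = one.
Proof.
  unfold mul_list. cbn [fold_left].
  rewrite <- !mul_b, mul_bb, inv_mul_cancel_r, mul_1_l, <- zpow_add_r, Z.add_opp_diag_l.
  reflexivity.
Qed.

Lemma relator_2 :
  mul_list mul one [a; a; a; a; k ^ (p - 18 * q); a; a; a; k ^ (- q); a⁻¹; a⁻¹; k ^ (- q); a⁻¹]
  = one.
Proof.
  unfold mul_list. cbn [fold_left].
  rewrite mul_assoc, !mul_bb, mul_b in Hrel. rewrite mul_1_l. exact Hrel.
Qed.

End Relators.

Section Fixedness.
Context {P : Type} {act : P -> G -> P} {a k : G} {r q : Z}.
Hypothesis Hw1 : mul_list mul one [a; a; k ^ r; a; a; a; k ^ r; a; a; k ^ q] = one.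
Hypothesis Hw2 :
  mul_list mul one [a; a; a; a; k ^ r; a; a; a; k ^ (- q); a⁻¹; a⁻¹; k ^ (- q); a⁻¹] = one.

Lemma a_fixed_of_k_fixed {le : P -> P -> Prop} (HP : IsPartialOrder P le)
  (Hact : IsOrderRightAction G mul one P le act) x :
  act x k = x -> le x (act x a) -> act x a = x.
Proof.
  intros Hk Ha.
  assert (Hkn : forall n, le x (act x (k ^ n))).
  { intros n. apply (raised_of_fixed HP), (fixed_zpow Hact), Hk. }
  pose proof (f_equal (act x) Hw1) as Hx. rewrite (act_one _ _ _ _ _ _ Hact) in Hx.
  apply (fixed_of_raised_list Hact HP) in Hx; [|repeat constructor; auto].
  exact (Forall_inv Hx).
Qed.

Lemma kpows_fixed_of_raised {le : P -> P -> Prop} (HP : IsPartialOrder P le)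
  (Hact : IsOrderRightAction G mul one P le act) x :
  act x a = x -> le x (act x (k ^ r)) ->
  le x (act x (k ^ q)) \/ le x (act x (k ^ (- q))) ->
  act x (k ^ r) = x /\ act x (k ^ q) = x.
Proof.
  intros Ha Hr Hq.
  assert (Ha' : le x (act x a)) by exact (raised_of_fixed HP _ Ha).
  assert (Hai : le x (act x a⁻¹)) by exact (raised_of_fixed HP _ (fixed_inv Hact _ Ha)).
  destruct Hq as [Hq|Hq].
  - pose proof (f_equal (act x) Hw1) as Hx. rewrite (act_one _ _ _ _ _ _ Hact) in Hx.
    apply (fixed_of_raised_list Hact HP) in Hx; [|repeat constructor; assumption].
    rewrite Forall_forall in Hx. split; apply Hx; simpl; intuition.
  - pose proof (f_equal (act x) Hw2) as Hx. rewrite (act_one _ _ _ _ _ _ Hact) in Hx.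
    apply (fixed_of_raised_list Hact HP) in Hx; [|repeat constructor; assumption].
    rewrite Forall_forall in Hx. split; [apply Hx; simpl; intuition|].
    rewrite <- (Z.opp_involutive q), zpow_opp_r. apply (fixed_inv Hact).
    apply Hx. simpl. intuition.
Qed.

Lemma k_fixed_of_a_fixed {le : P -> P -> Prop} (HP : IsPartialOrder P le)
  (Hact : IsOrderRightAction G mul one P le act) x :
  Z.gcd r q = 1 -> act x a = x -> le x (act x k) -> act x k = x.
Proof.
  intros Hrq Ha Hk.
  assert (Hup : forall n, 0 <= n -> le x (act x (k ^ n))).
  { intros n Hn. exact (raised_zpow Hact HP _ _ Hk Hn). }
  assert (Hdown : forall n, n <= 0 -> le (act x (k ^ n)) x).
  { intros n Hn. exact (lowered_zpow Hact HP _ _ Hk Hn). }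
  assert (Hkrq : act x (k ^ r) = x /\ act x (k ^ q) = x).
  { destruct (Z.le_ge_cases 0 r) as [Hr|Hr].
    - apply (kpows_fixed_of_raised HP Hact); auto.
      destruct (Z.le_ge_cases 0 q); [left|right]; apply Hup; lia.
    - apply (kpows_fixed_of_raised (partial_order_flip HP) (order_action_flip Hact)); auto.
      destruct (Z.le_ge_cases 0 q); [right|left]; apply Hdown; lia. }
  destruct Hkrq as [Hkr Hkq].
  exact (fixed_of_coprime_zpow Hact k r q Hrq Hkr Hkq).
Qed.

End Fixedness.

End Group.

Theorem mainTheorem7
  (p q : Z) (Hpq : Z.gcd p q = 1)
  (G : Type) (mul : G -> G -> G) (inv : G -> G) (one : G)
  (HG : IsGroup G mul inv one)
  (a b : G)
  (Hgen : forall g : G, generated mul inv one a b g)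
  (Hrel : mul (mul (mul (mul (mul (mul (mul (mul a a) b) a) a) b) b) (inv a))
              (mul b b) = one)
  (Hsurg : let m := mul (inv a) (inv (mul b b)) in
           let l := mul (mul (mul a (inv b)) (mul a a)) (zpow mul inv one m (-18)) in
           mul (zpow mul inv one m p) (zpow mul inv one l q) = one)
  (k : G)
  (Hkm : zpow mul inv one k q = mul (inv a) (inv (mul b b)))
  (Hkl : zpow mul inv one k (- p) =
         mul (mul (mul a (inv b)) (mul a a))
             (zpow mul inv one (mul (inv a) (inv (mul b b))) (-18)))
  (P : Type) (le : P -> P -> Prop) (HP : IsPartialOrder P le)
  (act : P -> G -> P) (Hact : IsOrderRightAction G mul one P le act)
  (x : P)
  (Hx : (act x k = x /\ comparable le x (act x a)) \/
        (act x a = x /\ comparable le x (act x k))) :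
  forall g : G, act x g = x.
Proof.
  pose proof (relator_1 HG Hkm Hkl) as Hw1.
  pose proof (relator_2 HG Hrel Hkm Hkl) as Hw2.
  assert (Hrq : Z.gcd (p - 18 * q) q = 1).
  { rewrite Z.gcd_comm, <- Z.add_opp_r, <- Z.mul_opp_l, Z.gcd_add_mult_diag_r, Z.gcd_comm.
    exact Hpq. }
  pose proof (partial_order_flip HP) as HP'. pose proof (order_action_flip Hact) as Hact'.
  assert (Hak : act x a = x /\ act x k = x).
  { destruct Hx as [[Hk [Ha|Ha]]|[Ha [Hk|Hk]]]; split; try assumption.
    - exact (a_fixed_of_k_fixed HG Hw1 HP Hact x Hk Ha).
    - exact (a_fixed_of_k_fixed HG Hw1 HP' Hact' x Hk Ha).
    - exact (k_fixed_of_a_fixed HG Hw1 Hw2 HP Hact x Hrq Ha Hk).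
    - exact (k_fixed_of_a_fixed HG Hw1 Hw2 HP' Hact' x Hrq Ha Hk). }
  destruct Hak as [Ha Hk].
  assert (Hb : act x b = x).
  { rewrite (b_eq HG Hkm Hkl).
    repeat apply (fixed_mul Hact); try apply (fixed_zpow HG Hact); assumption. }
  intros g. exact (fixed_generated HG Hact a b g Ha Hb (Hgen g)).
Qed.
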